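(* Let $n\ge 0$ and let $v(t)=\sum_{i=0}^{n+1}\mathbf{v}_iB^{n+1}_i(t)$ and $w(t)=\sum_{i=0}^{n+1}\mathbf{w}_iB^{n+1}_i(t)$ be real polynomials of degree at most $n+1$. Define the $(n+1)\times(n+1)$ Toeplitz matrices $T^{v,n}_{ij}=\binom{n+1}{j-i}\mathbf{v}_{j-i}$, $T^{w,n}_{ij}=\binom{n+1}{j-i}\mathbf{w}_{j-i}$, the Hankel matrices $H^{v,n}_{ij}=\binom{n+1}{i+j+1}\mathbf{v}_{i+j+1}$, $H^{w,n}_{ij}=\binom{n+1}{i+j+1}\mathbf{w}_{i+j+1}$ ($0\le i,j\le n$), and $\Delta^n=\mathrm{diag}\big(\binom{n}{j}\big)_{j=0}^n$. Then $$\mathrm{Bez}(v,w)=(\Delta^n)^{-1}\big[H^{v,n}T^{w,n}-H^{w,n}T^{v,n}\big](\Delta^n)^{-1}.$$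
   Context: Bernstein polynomials of degree $n$: $B^n_j(x)=\binom{n}{j}x^j(1-x)^{n-j}$. The Bernstein–Bézout matrix $\mathrm{Bez}(v,w)$ of two polynomials $v,w$ of degree at most $n+1$ is the unique $(n+1)\times(n+1)$ matrix $(b_{ij})_{i,j=0}^n$ satisfying $\frac{v(s)w(t)-v(t)w(s)}{s-t}=\sum_{i,j=0}^n b_{ij}B^n_i(s)B^n_j(t)$. Convention: $\binom{a}{b}=0$ if $b<0$ or $b>a$ (so entries with out-of-range indices vanish, regardless of the undefined coefficient they multiply). *)

From mathcomp Require Import all_boot all_order all_algebra.
Unset Printing Implicit Defensive.
Import Order.TTheory GRing.Theory Num.Theory.
Local Open Scope ring_scope.

Definition bern {R : pzRingType} (n j : nat) (x : R) : R :=
  'C(n, j)%:R * x ^+ j * (1 - x) ^+ (n - j).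

Definition bpoly {R : pzRingType} (m : nat) (c : nat -> R) (t : R) : R :=
  \sum_(i < m.+1) c i * bern m i t.

(* M is the Bernstein-Bezout matrix of v and w (of degree <= n+1):
   (v(s)w(t) - v(t)w(s))/(s-t) = sum_ij M_ij B^n_i(s) B^n_j(t), stated
   without division (multiplied by s - t) for all s, t. *)
Definition is_BernBez {R : comPzRingType} (n : nat) (v w : R -> R)
  (M : 'M[R]_n.+1) : Prop :=
  forall s t : R,
    (s - t) * (\sum_(i < n.+1) \sum_(j < n.+1) M i j * bern n i s * bern n j t)
    = v s * w t - v t * w s.

Definition toepB {R : pzRingType} (n : nat) (c : nat -> R) : 'M[R]_n.+1 :=
  \matrix_(i < n.+1, j < n.+1)
    (if (i <= j)%N then 'C(n.+1, j - i)%:R * c (j - i)%N else 0).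

Definition hankB {R : pzRingType} (n : nat) (c : nat -> R) : 'M[R]_n.+1 :=
  \matrix_(i < n.+1, j < n.+1) ('C(n.+1, i + j + 1)%:R * c (i + j + 1)%N).

Definition deltaB {R : pzRingType} (n : nat) : 'M[R]_n.+1 :=
  diag_mx (\row_(j < n.+1) ('C(n, j)%:R : R)).

From mathcomp Require Import all_boot all_order all_algebra.
From mathcomp Require Import ring zify.
Import GRing.Theory Num.Theory.
Local Open Scope ring_scope.

(* Write B^m_i = C(m, i) b^m_i with b^m_i(x) = x^i (1 - x)^(m - i) (bmon), so
   that v = sum_p V_p b^(n+1)_p with V_p = C(n+1, p) v_p (wcoef).  The proof
   works in the unweighted basis b^n and only uses commutative-ring algebra:
   - v(s)w(t) - v(t)w(s) = sum_(p,q) V_p W_q (b_p(s) b_q(t) - b_q(s) b_p(t))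
     (bpoly_antisym);
   - telescoping the degree elevation (s - t) b^n_i(s) b^n_j(t) =
     b^(n+1)_(i+1)(s) b^(n+1)_j(t) - b^(n+1)_i(s) b^(n+1)_(j+1)(t) shows that
     each antisymmetric product above is (s - t) times the bilinear form of the
     0/1 matrix C_pq - C_qp, where C_pq is supported on the antidiagonal
     i + j + 1 = p + q with i < p (bform_conv_antisym);
   - expanding H and T on 0/1 Hankel and Toeplitz patterns gives
     H^v T^w = sum_(p,q) V_p W_q C_pq (hank_toep_decomp), hence
     H^v T^w - H^w T^v is the Bezout matrix in the basis b^n (bezout_bform);
   - conjugation by Delta^-1 turns the basis b^n into the Bernstein basis B^n
     (bern_form), which yields the theorem. *)


Section BernsteinMonomials.
Variable R : comPzRingType.

Definition bmon (m i : nat) (x : R) : R := x ^+ i * (1 - x) ^+ (m - i).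

Definition wcoef (m : nat) (c : nat -> R) (p : nat) : R := 'C(m, p)%:R * c p.

Lemma bern_bmon (m i : nat) (x : R) : bern m i x = 'C(m, i)%:R * bmon m i x.
Proof. by rewrite /bern /bmon mulrA. Qed.

Lemma bpolyE (m : nat) (c : nat -> R) (t : R) :
  bpoly m c t = \sum_(p < m.+1) wcoef m c p * bmon m p t.
Proof.
by rewrite /bpoly; apply: eq_bigr => p _; rewrite bern_bmon /wcoef mulrCA mulrA.
Qed.

Lemma bpoly_antisym (m : nat) (v w : nat -> R) (s t : R) :
  bpoly m v s * bpoly m w t - bpoly m v t * bpoly m w s =
  \sum_(p < m.+1) \sum_(q < m.+1) wcoef m v p * wcoef m w q *
    (bmon m p s * bmon m q t - bmon m q s * bmon m p t).
Proof.
rewrite !bpolyE !mulr_suml -sumrB; apply: eq_bigr => p _.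
by rewrite !mulr_sumr -sumrB; apply: eq_bigr => q _; ring.
Qed.

Lemma bmon_step (n i j : nat) (s t : R) : (i <= n)%N -> (j <= n)%N ->
  (s - t) * (bmon n i s * bmon n j t) =
  bmon n.+1 i.+1 s * bmon n.+1 j t - bmon n.+1 i s * bmon n.+1 j.+1 t.
Proof.
by move=> hi hj; rewrite /bmon !subSS (subSn hi) (subSn hj) !exprS; ring.
Qed.

Lemma bmon_telescope (n p q : nat) (s t : R) : (p <= q)%N -> (q <= n.+1)%N ->
  (s - t) * \sum_(p <= i < q) bmon n i s * bmon n (p + q - i.+1) t =
  bmon n.+1 q s * bmon n.+1 p t - bmon n.+1 p s * bmon n.+1 q t.
Proof.
move=> hpq hqn; rewrite mulr_sumr.
rewrite (telescope_sumr_eq (fun i => bmon n.+1 i s * bmon n.+1 (p + q - i) t)) //.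
  by rewrite addnK addKn.
move=> i /andP[hpi hiq]; rewrite bmon_step; [|lia|lia].
by have -> : (p + q - i.+1).+1 = (p + q - i)%N by lia.
Qed.

End BernsteinMonomials.
Arguments bmon {R}.
Arguments wcoef {R}.

Section HankelToeplitz.
Variables (R : comPzRingType) (n : nat).

Definition hank_unit (p : nat) : 'M[R]_n.+1 :=
  \matrix_(i, k) ((p == i + k + 1)%N)%:R.
Definition toep_unit (q : nat) : 'M[R]_n.+1 :=
  \matrix_(k, j) (((k <= j) && (q == j - k))%N)%:R.
Definition conv_unit (p q : nat) : 'M[R]_n.+1 :=
  \matrix_(i, j) (((i < p) && (i + j + 1 == p + q))%N)%:R.

(* hankB is a combination of Hankel patterns; indices above n + 1 carry a
   vanishing binomial. *)
Lemma hankB_decomp (c : nat -> R) :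
  hankB n c = \sum_(p < n.+2) wcoef n.+1 c p *: hank_unit p.
Proof.
apply/matrixP => i k; rewrite !mxE summxE.
under eq_bigr do rewrite !mxE mulr_natr mulrb.
rewrite -big_mkcond big_ord1_eq; case: ltnP => // hn.
by rewrite bin_small // mul0r.
Qed.

(* toepB is a combination of Toeplitz patterns; all its indices are <= n. *)
Lemma toepB_decomp (c : nat -> R) :
  toepB n c = \sum_(q < n.+2) wcoef n.+1 c q *: toep_unit q.
Proof.
apply/matrixP => k j; rewrite !mxE summxE.
under eq_bigr do rewrite !mxE mulr_natr mulrb.
rewrite -big_mkcond; case: leqP => hkj.
  by rewrite big_ord1_eq ifT //; have := ltn_ord j; lia.
by rewrite big1.
Qed.

(* In the product, the summation index k is forced to be p - i - 1. *)
Lemma hank_toep_unit (p q : nat) : hank_unit p *m toep_unit q = conv_unit p q.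
Proof.
apply/matrixP => i j; rewrite !mxE.
set P := ((i < p) && (i + j + 1 == p + q))%N.
have term (k : 'I_n.+1) :
    ((p == i + k + 1)%N%:R * ((k <= j) && (q == j - k))%N%:R : R) =
    if k == (p - i.+1)%N :> nat then P%:R else 0.
  rewrite -natrM mulnb.
  have -> : [&& p == i + k + 1, k <= j & q == j - k]%N =
             (k == (p - i.+1)%N :> nat) && P.
    by rewrite /P; apply/idP/idP; lia.
  by case: eqP.
under eq_bigr do rewrite !mxE term.
rewrite -big_mkcond (big_ord1_eq _ (fun=> P%:R)); case: ltnP => // hc.
by case hP: P => //; move: hP; rewrite /P; have := ltn_ord j; lia.
Qed.

Lemma hank_toep_decomp (v w : nat -> R) :
  hankB n v *m toepB n w =
  \sum_(p < n.+2) \sum_(q < n.+2)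
    (wcoef n.+1 v p * wcoef n.+1 w q) *: conv_unit p q.
Proof.
rewrite hankB_decomp toepB_decomp mulmx_suml; apply: eq_bigr => p _.
rewrite mulmx_sumr; apply: eq_bigr => q _.
by rewrite -scalemxAl -scalemxAr scalerA hank_toep_unit.
Qed.

End HankelToeplitz.
Arguments conv_unit {R}.

Section MonomialForm.
Variables (R : comPzRingType) (n : nat) (s t : R).

Definition bform (M : 'M[R]_n.+1) : R :=
  \sum_(i < n.+1) \sum_(j < n.+1) M i j * (bmon n i s * bmon n j t).

Lemma bform0 : bform 0 = 0.
Proof. by apply: big1 => i _; apply: big1 => j _; rewrite mxE mul0r. Qed.

Lemma bformD (M N : 'M[R]_n.+1) : bform (M + N) = bform M + bform N.
Proof.
rewrite /bform -big_split; apply: eq_bigr => i _.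
by rewrite -big_split; apply: eq_bigr => j _; rewrite mxE mulrDl.
Qed.

Lemma bformZ (a : R) (M : 'M[R]_n.+1) : bform (a *: M) = a * bform M.
Proof.
rewrite /bform mulr_sumr; apply: eq_bigr => i _.
by rewrite mulr_sumr; apply: eq_bigr => j _; rewrite mxE -mulrA.
Qed.

Lemma bformN (M : 'M[R]_n.+1) : bform (- M) = - bform M.
Proof. by rewrite -scaleN1r bformZ mulN1r. Qed.

Lemma bform_sum (I : Type) (r : seq I) (P : pred I) (F : I -> 'M[R]_n.+1) :
  bform (\sum_(k <- r | P k) F k) = \sum_(k <- r | P k) bform (F k).
Proof. exact: (big_morph _ bformD bform0). Qed.

Lemma conv_unit_diff (p q : nat) (i j : 'I_n.+1) : (p <= q)%N ->
  (conv_unit n q p - conv_unit n p q) i j =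
  ((p <= i < q) && (j == p + q - i.+1 :> nat))%N%:R :> R.
Proof.
move=> hpq; rewrite !mxE [(q + p)%N]addnC; case: (ltnP i p) => hip.
  by rewrite (leq_trans hip hpq) subrr.
by rewrite /= subr0; congr ((nat_of_bool _)%:R); apply/idP/idP; lia.
Qed.

Lemma bform_conv_diff (p q : nat) : (p <= q)%N -> (q <= n.+1)%N ->
  bform (conv_unit n q p - conv_unit n p q) =
  \sum_(p <= i < q) bmon n i s * bmon n (p + q - i.+1) t.
Proof.
move=> hpq hqn; rewrite (big_nat_widen _ _ n.+1) // big_geq_mkord big_mkcond.
apply: eq_bigr => i _; rewrite andbC.
under eq_bigr do rewrite conv_unit_diff // mulr_natl mulrb.
have [hi|hi] := boolP (p <= i < q)%N; last by apply: big1.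
rewrite -big_mkcond /= (big_ord1_eq _ (fun j => bmon n i s * bmon n j t)) ifT //.
by move: hi; lia.
Qed.

Lemma bform_conv_antisym (p q : nat) : (p <= n.+1)%N -> (q <= n.+1)%N ->
  (s - t) * bform (conv_unit n p q - conv_unit n q p) =
  bmon n.+1 p s * bmon n.+1 q t - bmon n.+1 q s * bmon n.+1 p t.
Proof.
wlog hpq : p q / (p <= q)%N => [hwlog hp hq | _ hq].
  case: (leqP p q) => [hpq | /ltnW hqp]; first exact: hwlog.
  by rewrite -[conv_unit n p q - _]opprB bformN mulrN (hwlog q p) // opprB.
rewrite -[conv_unit n p q - _]opprB bformN mulrN bform_conv_diff //.
by rewrite bmon_telescope // opprB.
Qed.

Lemma bezout_bform (v w : nat -> R) :
  (s - t) * bform (hankB n v *m toepB n w - hankB n w *m toepB n v) =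
  bpoly n.+1 v s * bpoly n.+1 w t - bpoly n.+1 v t * bpoly n.+1 w s.
Proof.
set V := wcoef n.+1 v; set W := wcoef n.+1 w.
have -> : hankB n v *m toepB n w - hankB n w *m toepB n v =
    \sum_(p < n.+2) \sum_(q < n.+2)
      (V p * W q) *: (conv_unit n p q - conv_unit n q p).
  rewrite !hank_toep_decomp [X in _ - X]exchange_big -sumrB.
  apply: eq_bigr => p _.
  by rewrite -sumrB; apply: eq_bigr => q _; rewrite scalerBr mulrC.
rewrite bpoly_antisym bform_sum mulr_sumr; apply: eq_bigr => p _.
rewrite bform_sum mulr_sumr; apply: eq_bigr => q _.
by rewrite bformZ mulrCA bform_conv_antisym // -ltnS.
Qed.

End MonomialForm.
Arguments bform {R} n s t M.

Section BernsteinScaling.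
Variables (R : numFieldType) (n : nat).

Lemma binom_neq0 (j : 'I_n.+1) : ('C(n, j)%:R : R) != 0.
Proof. by rewrite pnatr_eq0 -lt0n bin_gt0 -ltnS. Qed.

Lemma invmx_deltaB :
  invmx (deltaB n) = diag_mx (\row_(j < n.+1) ('C(n, j)%:R : R)^-1).
Proof.
set D := diag_mx _.
have DD : deltaB n *m D = 1%:M.
  rewrite /deltaB mulmx_diag -diag_const_mx; congr diag_mx.
  by apply/rowP => j; rewrite !mxE mulfV ?binom_neq0.
have [unitD _] := mulmx1_unit DD.
by rewrite -[RHS](mulKmx unitD) DD mulmx1.
Qed.

(* Conjugating by Delta^-1 turns the Bernstein basis into the unweighted one:
   the binomial weights of B^n_i(s) B^n_j(t) cancel those of Delta^-1. *)
Lemma bern_form (M : 'M[R]_n.+1) (s t : R) :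
  \sum_(i < n.+1) \sum_(j < n.+1)
     (invmx (deltaB n) *m M *m invmx (deltaB n)) i j * bern n i s * bern n j t
  = bform n s t M.
Proof.
apply: eq_bigr => i _; apply: eq_bigr => j _.
rewrite invmx_deltaB mul_mx_diag mxE mul_diag_mx !mxE !bern_bmon.
by field; rewrite !binom_neq0.
Qed.

End BernsteinScaling.

Theorem corollary2p6 (R : realFieldType) (n : nat) (vc wc : nat -> R) :
  is_BernBez n (bpoly n.+1 vc) (bpoly n.+1 wc)
    (invmx (deltaB n)
       *m (hankB n vc *m toepB n wc - hankB n wc *m toepB n vc)
       *m invmx (deltaB n)).
Proof. by move=> s t; rewrite bern_form bezout_bform. Qed.
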